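(* Let $k\ge 3$ be an integer such that every set of $k-1$ distinct positive integers has the LR property. Let $p$ be a positive integer with the following property: for all $v_1,\ldots,v_k\in\{0,1,\ldots,(k+1)p-1\}$ such that (i) for every subset $S\subseteq\{v_1,\ldots,v_k\}$ of size $k-1$ we have $\gcd(S\cup\{(k+1)p\})=1$, and (ii) no $v_i$ is divisible by $p$, there exists $t\in\{0,1,\ldots,(k+1)p-1\}$ such that $\left\|\frac{t v_i}{(k+1)p}\right\|\ge\frac{1}{k+1}$ for all $i$. Then for every set $\{v_1,\ldots,v_k\}$ of $k$ distinct integers that does not have the LR property, $p$ divides $\prod_{i=1}^k v_i$.
   Context: For a real number $x$, $\|x\|$ denotes the distance from $x$ to the nearest integer. A finite set $S$ of $m$ integers has the LR (lonely runner) property if there exists a real $t$ such that $\|tv\|\ge \frac{1}{m+1}$ for all $v\in S$. The hypothesis ''every set of $k-1$ distinct positive integers has the LR property'' is what the paper calls ''the lonely runner conjecture holds for $k-1$''. *)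

From Stdlib Require Import Reals ZArith List.
Import ListNotations.
Open Scope R_scope.

(* ||x|| : distance from x to the nearest integer.
   up x is the unique integer with x < up x <= x + 1 (i.e. ceil x, or x+1 if
   x is an integer), so min(up x - x, x - (up x - 1)) is the distance to the
   nearest integer. *)
Definition dnear (x : R) : R :=
  Rmin (IZR (up x) - x) (x - (IZR (up x) - 1)).

Definition LR_property (S : list Z) : Prop :=
  exists t : R, forall v, In v S ->
    dnear (t * IZR v) >= 1 / (INR (length S) + 1).

Definition LRC_holds (n : nat) : Prop :=
  forall S : list Z, NoDup S -> length S = n ->
    (forall v, In v S -> (0 < v)%Z) -> LR_property S.

Definition remove_at {A : Type} (i : nat) (l : list A) : list A :=
  firstn i l ++ skipn (S i) l.

Definition gcd_with (N : Z) (l : list Z) : Z := fold_right Z.gcd N l.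

Definition good_p (k : nat) (p : Z) : Prop :=
  let N := (Z.of_nat (S k) * p)%Z in
  forall v : list Z, length v = k ->
    (forall x, In x v -> (0 <= x < N)%Z) ->
    (forall i, (i < k)%nat -> gcd_with N (remove_at i v) = 1%Z) ->
    (forall x, In x v -> ~ (p | x)%Z) ->
    exists t : Z, (0 <= t < N)%Z /\
      forall x, In x v ->
        dnear (IZR (t * x) / IZR N) >= 1 / (INR k + 1).

(* Let v be a counterexample with p dividing no entry; dividing by the gcd we
   may assume gcd(v) = 1.  Reduce v modulo N = (k+1)p.  If some k-1 of the
   residues had a common factor d > 1 with N, then d divides those k-1 entries
   of v but, as gcd(v) = 1, not the remaining one c; running the (k-1)-set at
   a speed t0 given by the conjecture for k-1 and adding a suitable j/d to t0
   leaves those runners where they were and pushes c t to within [1/4, 3/4]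
   modulo 1, so v would have the LR property.  Hence the residues satisfy (i)
   and (ii), and the hypothesis on p yields a time t/N that works for v. *)

From Stdlib Require Import Reals ZArith List Znumtheory Lia Lra FinFun Classical.
Open Scope R_scope.

Definition int_dist_ge (c x : R) : Prop := forall n : Z, c <= Rabs (x - IZR n).

Lemma dnear_ge_iff x c : dnear x >= c <-> int_dist_ge c x.
Proof.
  unfold dnear, int_dist_ge. destruct (archimed x) as [Hup1 Hup2]. split.
  - intros H n.
    assert (Hc : c <= IZR (up x) - x /\ c <= x - (IZR (up x) - 1)).
    { unfold Rmin in H. destruct (Rle_dec _ _); lra. }
    destruct (Z_le_gt_dec (up x) n) as [Hn | Hn].
    + apply IZR_le in Hn. unfold Rabs; destruct (Rcase_abs _); lra.
    + assert (Hn' : (n <= up x - 1)%Z) by lia.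
      apply IZR_le in Hn'. rewrite minus_IZR in Hn'.
      unfold Rabs; destruct (Rcase_abs _); lra.
  - intros H.
    pose proof (H (up x)) as Habove. pose proof (H (up x - 1)%Z) as Hbelow.
    rewrite minus_IZR in Hbelow. unfold Rabs in Habove, Hbelow.
    destruct (Rcase_abs (x - IZR (up x)));
      destruct (Rcase_abs (x - (IZR (up x) - IZR 1))); try lra.
    apply Rle_ge, Rmin_glb; simpl in *; lra.
Qed.

Lemma int_dist_ge_add_IZR c x m : int_dist_ge c x -> int_dist_ge c (x + IZR m).
Proof.
  intros H n. specialize (H (n - m)%Z). rewrite minus_IZR in H.
  replace (x + IZR m - IZR n) with (x - (IZR n - IZR m)) by ring. exact H.
Qed.

Lemma int_dist_ge_opp c x : int_dist_ge c x -> int_dist_ge c (- x).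
Proof.
  intros H n. specialize (H (- n)%Z). rewrite opp_IZR in H.
  replace (- x - IZR n) with (- (x - - IZR n)) by ring.
  rewrite Rabs_Ropp. exact H.
Qed.

Lemma int_dist_ge_le c c' x : c' <= c -> int_dist_ge c x -> int_dist_ge c' x.
Proof. intros Hc H n. specialize (H n). lra. Qed.

Lemma int_dist_ge_quarter x : 1/4 <= x <= 3/4 -> int_dist_ge (1/4) x.
Proof.
  intros Hx n. destruct (Z_le_gt_dec n 0) as [Hn | Hn].
  - apply IZR_le in Hn. unfold Rabs; destruct (Rcase_abs _); lra.
  - assert (Hn' : (1 <= n)%Z) by lia.
    apply IZR_le in Hn'. unfold Rabs; destruct (Rcase_abs _); lra.
Qed.

Lemma one_div_le_contravar (a b : R) : 0 < b -> b <= a -> 1 / a <= 1 / b.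
Proof.
  intros Hb Hba. unfold Rdiv. rewrite !Rmult_1_l.
  apply Rinv_le_contravar; lra.
Qed.

(* Consecutive multiples of 1/e are at most 1/2 apart. *)
Lemma exists_shift_in_middle (y : R) (e : Z) :
  (2 <= e)%Z -> exists m : Z, 1/4 <= y + IZR m / IZR e <= 3/4.
Proof.
  intros He. apply IZR_le in He.
  set (m := up ((1/2 - y) * IZR e - 1/2)).
  destruct (archimed ((1/2 - y) * IZR e - 1/2)) as [Hm1 Hm2]. fold m in Hm1, Hm2.
  exists m.
  replace (y + IZR m / IZR e) with ((y * IZR e + IZR m) * / IZR e) by (field; lra).
  assert (Hinv : 0 < / IZR e) by (apply Rinv_0_lt_compat; lra).
  replace (1/4) with ((IZR e / 4) * / IZR e) by (field; lra).
  replace (3/4) with ((3 * IZR e / 4) * / IZR e) by (field; lra).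
  split; apply Rmult_le_compat_r; lra.
Qed.

Lemma exists_shift_int_dist_quarter (t0 : R) (c d : Z) :
  (0 < d)%Z -> ~ (d | c)%Z ->
  exists j : Z, int_dist_ge (1/4) ((t0 + IZR j / IZR d) * IZR c).
Proof.
  intros Hd Hdc.
  set (g := Z.gcd c d).
  assert (Hg : (0 < g)%Z).
  { assert (g <> 0%Z) by (intro E; apply Z.gcd_eq_0 in E; lia).
    pose proof (Z.gcd_nonneg c d). unfold g in *; lia. }
  destruct (Z.gcd_divide_l c d) as [c' Hc']. destruct (Z.gcd_divide_r c d) as [e He].
  fold g in Hc', He.
  assert (Hcoprime : Z.gcd c' e = 1%Z).
  { assert (E : g = (Z.gcd c' e * Z.abs g)%Z).
    { rewrite <- Z.gcd_mul_mono_r, <- Hc', <- He. reflexivity. }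
    rewrite Z.abs_eq in E by lia. nia. }
  assert (He2 : (2 <= e)%Z).
  { assert (e <> 1%Z); [|nia].
    intro E. apply Hdc. rewrite He, E, Z.mul_1_l. apply Z.gcd_divide_l. }
  destruct (Z.gcd_bezout c' e 1%Z Hcoprime) as [a [b Hab]].
  destruct (exists_shift_in_middle (t0 * IZR c) e He2) as [m Hm].
  exists (a * m)%Z.
  (* a c' = 1 - b e, so (a m / d) c = a m c' / e = m / e - m b. *)
  replace ((t0 + IZR (a * m) / IZR d) * IZR c)
    with ((t0 * IZR c + IZR m / IZR e) + IZR (- (m * b))).
  - apply int_dist_ge_add_IZR, int_dist_ge_quarter. exact Hm.
  - assert (Hab' : IZR a * IZR c' = 1 - IZR b * IZR e).
    { rewrite <- !mult_IZR, <- minus_IZR. f_equal. lia. }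
    assert (HeR : IZR e <> 0) by (apply not_0_IZR; lia).
    assert (HgR : IZR g <> 0) by (apply not_0_IZR; lia).
    rewrite Hc', He, opp_IZR, !mult_IZR.
    replace ((t0 + IZR a * IZR m / (IZR e * IZR g)) * (IZR c' * IZR g))
      with (t0 * (IZR c' * IZR g) + IZR m * (IZR a * IZR c') / IZR e)
      by (field; lra).
    rewrite Hab'. field. exact HeR.
Qed.

Lemma exists_upper_bound (l : list Z) :
  exists y, (0 < y)%Z /\ forall x, In x l -> (x < y)%Z.
Proof.
  induction l as [|a l [y [Hy Hl]]].
  - exists 1%Z. split; [lia | intros x []].
  - exists (Z.max y (a + 1)). split; [lia|].
    intros x [<- | Hx]; [lia | specialize (Hl x Hx); lia].
Qed.

Lemma extend_to_distinct_positive (n : nat) (l : list Z) :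
  (forall x, In x l -> 0 < x)%Z -> (length l <= n)%nat ->
  exists T, NoDup T /\ length T = n /\ (forall x, In x T -> 0 < x)%Z /\ incl l T.
Proof.
  intros Hpos Hlen.
  destruct (exists_upper_bound l) as [y [Hy Hly]].
  set (l' := nodup Z.eq_dec l).
  assert (Hl' : forall x, In x l' <-> In x l) by apply nodup_In.
  assert (Hlen' : (length l' <= length l)%nat).
  { apply NoDup_incl_length; [apply NoDup_nodup | intros x; apply Hl']. }
  set (block := map (fun i => y + Z.of_nat i)%Z (seq 0 (n - length l'))).
  assert (Hblock : forall x, In x block -> (y <= x)%Z).
  { intros x Hx. apply in_map_iff in Hx. destruct Hx as [i [<- _]]. lia. }
  exists (l' ++ block). split; [|split; [|split]].
  - apply NoDup_app; [apply NoDup_nodup | |].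
    + apply Injective_map_NoDup; [intros i j E; lia | apply seq_NoDup].
    + intros x Hx Hx'. apply Hl' in Hx.
      specialize (Hly x Hx). specialize (Hblock x Hx'). lia.
  - unfold block. rewrite length_app, length_map, length_seq. lia.
  - intros x Hx. apply in_app_or in Hx as [Hx | Hx].
    + apply Hpos, Hl', Hx.
    + specialize (Hblock x Hx). lia.
  - intros x Hx. apply in_or_app. left. apply Hl', Hx.
Qed.

Lemma LRC_holds_nonzero n (S : list Z) :
  LRC_holds n -> length S = n -> (forall x, In x S -> x <> 0%Z) ->
  exists t, forall x, In x S -> int_dist_ge (1 / (INR n + 1)) (t * IZR x).
Proof.
  intros HLRC Hlen Hnz.
  destruct (extend_to_distinct_positive n (map Z.abs S)) as [T [HT [HTlen [HTpos HST]]]].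
  { intros x Hx. apply in_map_iff in Hx. destruct Hx as [y [<- Hy]].
    specialize (Hnz y Hy). lia. }
  { rewrite length_map. lia. }
  destruct (HLRC T HT HTlen HTpos) as [t Ht].
  exists t. intros x Hx.
  pose proof (Ht (Z.abs x) (HST _ (in_map _ _ _ Hx))) as Habs.
  rewrite HTlen in Habs. apply dnear_ge_iff in Habs.
  destruct (Z_le_gt_dec 0 x).
  - rewrite Z.abs_eq in Habs by lia. exact Habs.
  - rewrite Z.abs_neq, opp_IZR in Habs by lia.
    replace (t * IZR x) with (- (t * - IZR x)) by ring.
    apply int_dist_ge_opp. exact Habs.
Qed.

Lemma LR_property_map_mul (g : Z) (l : list Z) :
  g <> 0%Z -> LR_property l -> LR_property (map (Z.mul g) l).
Proof.
  intros Hg [t Ht]. exists (t / IZR g). rewrite length_map.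
  intros y Hy. apply in_map_iff in Hy. destruct Hy as [x [<- Hx]].
  rewrite mult_IZR.
  replace (t / IZR g * (IZR g * IZR x)) with (t * IZR x)
    by (field; apply not_0_IZR; exact Hg).
  apply Ht, Hx.
Qed.

Lemma int_dist_ge_mod c (N t x : Z) :
  (0 < N)%Z -> int_dist_ge c (IZR (t * (x mod N)) / IZR N) ->
  int_dist_ge c (IZR t / IZR N * IZR x).
Proof.
  intros HN H.
  replace (IZR t / IZR N * IZR x)
    with (IZR (t * (x mod N)) / IZR N + IZR (t * (x / N))).
  - apply int_dist_ge_add_IZR, H.
  - assert (Ex : IZR x = IZR N * IZR (x / N) + IZR (x mod N)).
    { rewrite <- mult_IZR, <- plus_IZR, <- Z.div_mod; [reflexivity | lia]. }
    rewrite Ex, !mult_IZR. field. apply not_0_IZR. lia.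
Qed.

Lemma divide_of_divide_mod (d N x : Z) : (d | N)%Z -> (d | x mod N)%Z -> (d | x)%Z.
Proof.
  intros HN Hx. destruct (Z.eq_dec N 0) as [-> | HN0].
  - rewrite Zmod_0_r in Hx. exact Hx.
  - rewrite (Z.div_mod x N HN0).
    apply Z.divide_add_r; [apply Z.divide_mul_l |]; assumption.
Qed.

Lemma In_prod_divide (x : Z) (l : list Z) : In x l -> (x | fold_right Z.mul 1 l)%Z.
Proof.
  induction l as [|a l IH]; simpl; intros Hx; [destruct Hx|].
  destruct Hx as [-> | Hx].
  - apply Z.divide_mul_l, Z.divide_refl.
  - apply Z.divide_mul_r, IH, Hx.
Qed.

Lemma gcd_with_divide_r N l : (gcd_with N l | N)%Z.
Proof.
  induction l as [|a l IH]; simpl; [apply Z.divide_refl|].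
  eapply Z.divide_trans; [apply Z.gcd_divide_r | exact IH].
Qed.

Lemma gcd_with_divide_In N l x : In x l -> (gcd_with N l | x)%Z.
Proof.
  induction l as [|a l IH]; simpl; intros Hx; [destruct Hx|].
  destruct Hx as [-> | Hx]; [apply Z.gcd_divide_l|].
  eapply Z.divide_trans; [apply Z.gcd_divide_r | apply IH, Hx].
Qed.

Lemma gcd_with_greatest N l d :
  (d | N)%Z -> (forall x, In x l -> (d | x)%Z) -> (d | gcd_with N l)%Z.
Proof.
  induction l as [|a l IH]; simpl; intros HN Hl; [exact HN|].
  apply Z.gcd_greatest; auto.
Qed.

Lemma gcd_with_nonneg N l : (0 <= N)%Z -> (0 <= gcd_with N l)%Z.
Proof. destruct l; simpl; intros; [assumption | apply Z.gcd_nonneg]. Qed.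

Lemma gcd_with_pos N l x : (0 <= N)%Z -> In x l -> x <> 0%Z -> (0 < gcd_with N l)%Z.
Proof.
  intros HN Hx Hx0.
  pose proof (gcd_with_nonneg N l HN).
  assert (gcd_with N l <> 0%Z); [|lia].
  intros E. apply Hx0, Z.divide_0_l. rewrite <- E. apply gcd_with_divide_In, Hx.
Qed.

Lemma gcd_with_map_mul g l :
  (0 < g)%Z -> gcd_with 0 (map (Z.mul g) l) = (g * gcd_with 0 l)%Z.
Proof.
  intros Hg. induction l as [|a l IH]; simpl; [ring|].
  rewrite IH, Z.gcd_mul_mono_l, Z.abs_eq by lia. reflexivity.
Qed.

Section RemoveAt.

Context {A : Type}.

Lemma In_remove_at (l : list A) i x : In x (remove_at i l) -> In x l.
Proof.
  revert i; induction l as [|a l IH]; intros [|i]; unfold remove_at in *; simpl; auto.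
  intros [-> | Hx]; [left; reflexivity | right; eapply IH, Hx].
Qed.

Lemma In_nth_or_remove_at (l : list A) i x d :
  (i < length l)%nat -> In x l -> x = nth i l d \/ In x (remove_at i l).
Proof.
  revert i; induction l as [|a l IH]; intros i Hi Hx; simpl in *; [lia|].
  unfold remove_at in *; destruct i as [|i]; simpl.
  - destruct Hx as [-> | Hx]; auto.
  - destruct Hx as [-> | Hx]; auto.
    destruct (IH i ltac:(lia) Hx); auto.
Qed.

Lemma length_remove_at (l : list A) i :
  (i < length l)%nat -> length (remove_at i l) = (length l - 1)%nat.
Proof.
  revert i; induction l as [|a l IH]; intros i Hi; simpl in *; [lia|].
  unfold remove_at in *; destruct i as [|i]; simpl; [lia|].
  rewrite IH; lia.
Qed.

Lemma map_remove_at B (f : A -> B) l i : map f (remove_at i l) = remove_at i (map f l).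
Proof. unfold remove_at. rewrite map_app, firstn_map, skipn_map. reflexivity. Qed.

End RemoveAt.

Arguments In_remove_at {A l i x}.

Section Reduction.

Variable k : nat.
Hypothesis k_ge_3 : (3 <= k)%nat.
Hypothesis LRC_pred : LRC_holds (k - 1).

Lemma LR_property_of_divisor_of_others (v : list Z) (i : nat) (d : Z) :
  length v = k -> (i < k)%nat -> (0 < d)%Z ->
  (forall x, In x v -> x <> 0%Z) ->
  (forall x, In x (remove_at i v) -> (d | x)%Z) -> ~ (d | nth i v 0)%Z ->
  LR_property v.
Proof.
  intros Hlen Hi Hd Hnz Hothers Hc.
  assert (Hk : 3 <= INR k) by (replace 3 with (INR 3) by (simpl; ring); apply le_INR; lia).
  destruct (LRC_holds_nonzero (k - 1) (remove_at i v)) as [t0 Ht0]; [exact LRC_pred | | |].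
  { rewrite length_remove_at; lia. }
  { intros x Hx. apply Hnz, (In_remove_at Hx). }
  replace (INR (k - 1) + 1) with (INR k) in Ht0
    by (rewrite minus_INR by lia; simpl; ring).
  destruct (exists_shift_int_dist_quarter t0 (nth i v 0%Z) d Hd Hc) as [j Hj].
  exists (t0 + IZR j / IZR d). rewrite Hlen. intros x Hx. apply dnear_ge_iff.
  destruct (In_nth_or_remove_at v i x 0%Z ltac:(lia) Hx) as [-> | Hx'].
  - apply int_dist_ge_le with (1/4); [apply one_div_le_contravar; lra | exact Hj].
  - destruct (Hothers x Hx') as [q ->].
    replace ((t0 + IZR j / IZR d) * IZR (q * d)) with (t0 * IZR (q * d) + IZR (j * q))
      by (rewrite !mult_IZR; field; apply not_0_IZR; lia).
    apply int_dist_ge_add_IZR, int_dist_ge_le with (1 / INR k);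
      [apply one_div_le_contravar; lra | apply Ht0, Hx'].
Qed.

Lemma gcd_with_remove_at_mod_eq_1 (u : list Z) (N : Z) (i : nat) :
  (0 < N)%Z -> length u = k -> (i < k)%nat -> gcd_with 0 u = 1%Z ->
  (forall x, In x u -> x <> 0%Z) -> ~ LR_property u ->
  gcd_with N (remove_at i (map (fun x => x mod N) u)) = 1%Z.
Proof.
  intros HN Hlen Hi Hprim Hnz HnLR.
  rewrite <- map_remove_at.
  set (d := gcd_with N _).
  assert (HdN : (d | N)%Z) by apply gcd_with_divide_r.
  assert (Hd0 : (0 <= d)%Z) by (apply gcd_with_nonneg; lia).
  assert (Hd : d <> 0%Z) by (intros E; rewrite E in HdN; apply Z.divide_0_l in HdN; lia).
  destruct (Z.eq_dec d 1) as [E | E]; [exact E | exfalso].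
  assert (Hothers : forall x, In x (remove_at i u) -> (d | x)%Z).
  { intros x Hx. apply (divide_of_divide_mod d N x HdN), gcd_with_divide_In.
    exact (in_map (fun x => x mod N) _ _ Hx). }
  apply HnLR, (LR_property_of_divisor_of_others u i d); auto; [lia |].
  intros Hc.
  assert (Hd1 : (d | gcd_with 0 u)%Z).
  { apply gcd_with_greatest; [apply Z.divide_0_r|].
    intros x Hx. destruct (In_nth_or_remove_at u i x 0%Z ltac:(lia) Hx) as [-> | Hx'];
      auto. }
  rewrite Hprim in Hd1. apply Z.divide_pos_le in Hd1; lia.
Qed.

Lemma LR_property_of_good_p (p : Z) (u : list Z) :
  (0 < p)%Z -> good_p k p -> length u = k -> gcd_with 0 u = 1%Z ->
  (forall x, In x u -> ~ (p | x)%Z) -> LR_property u.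
Proof.
  intros Hp Hgood Hlen Hprim Hnp.
  apply NNPP. intros HnLR.
  set (N := (Z.of_nat (S k) * p)%Z) in *.
  assert (HN : (0 < N)%Z) by (unfold N; lia).
  assert (HpN : (p | N)%Z) by (exists (Z.of_nat (S k)); reflexivity).
  assert (Hnz : forall x, In x u -> x <> 0%Z)
    by (intros x Hx ->; apply (Hnp 0%Z Hx), Z.divide_0_r).
  destruct (Hgood (map (fun x => x mod N) u)) as [t [_ Ht]].
  - rewrite length_map. exact Hlen.
  - intros y Hy. apply in_map_iff in Hy. destruct Hy as [x [<- _]].
    apply Z.mod_pos_bound. exact HN.
  - intros i Hi. apply gcd_with_remove_at_mod_eq_1; assumption.
  - intros y Hy Hpy. apply in_map_iff in Hy. destruct Hy as [x [<- Hx]].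
    apply (Hnp x Hx), (divide_of_divide_mod p N x HpN Hpy).
  - apply HnLR. exists (IZR t / IZR N). rewrite Hlen. intros x Hx.
    apply dnear_ge_iff, int_dist_ge_mod; [exact HN|].
    apply dnear_ge_iff, Ht, (in_map (fun x => x mod N) _ _ Hx).
Qed.

End Reduction.

Theorem lemma5 (k : nat) (p : Z) :
  (3 <= k)%nat ->
  LRC_holds (k - 1) ->
  (0 < p)%Z ->
  good_p k p ->
  forall v : list Z, NoDup v -> length v = k ->
    ~ LR_property v ->
    (p | fold_right Z.mul 1%Z v)%Z.
Proof.
  intros Hk HLRC Hp Hgood v _ Hlen HnLR.
  apply NNPP. intros Hprod.
  assert (Hnp : forall x, In x v -> ~ (p | x)%Z)
    by (intros x Hx Hpx; apply Hprod, (Z.divide_trans _ _ _ Hpx), In_prod_divide, Hx).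
  assert (Hx0 : In (nth 0 v 0%Z) v) by (apply nth_In; lia).
  set (g := gcd_with 0 v).
  assert (Hg : (0 < g)%Z).
  { apply (gcd_with_pos 0 v _ (Z.le_refl 0) Hx0).
    intros E. apply (Hnp _ Hx0). rewrite E. apply Z.divide_0_r. }
  set (u := map (fun x => x / g)%Z v).
  assert (Hv : v = map (Z.mul g) u).
  { unfold u. rewrite map_map, <- map_id at 1. apply map_ext_in.
    intros x Hx. apply Zdivide_Zdiv_eq; [exact Hg | apply gcd_with_divide_In, Hx]. }
  assert (Hprim : gcd_with 0 u = 1%Z).
  { pose proof (gcd_with_map_mul g u Hg) as E. rewrite <- Hv in E. fold g in E. nia. }
  apply HnLR. rewrite Hv. apply LR_property_map_mul; [lia|].
  apply (LR_property_of_good_p k Hk HLRC p u Hp Hgood).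
  - unfold u. rewrite length_map. exact Hlen.
  - exact Hprim.
  - intros y Hy Hpy. apply in_map_iff in Hy. destruct Hy as [x [<- Hx]].
    apply (Hnp x Hx). rewrite (Zdivide_Zdiv_eq g x Hg (gcd_with_divide_In 0 v x Hx)).
    apply Z.divide_mul_r, Hpy.
Qed.
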